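(* Let $k\ge2$, $n\ge1$, $A=\{0<1<\cdots<k-1\}$, $v\in\Gamma_{k,n}$ and $\pi=\pi(v)=\bigcup_{i}\pi_{i}$ its standard permutation of $[k^{n}]$. Let $1\le m\le n$ and $e=\varepsilon_{1}\varepsilon_{2}\cdots\varepsilon_{m}\in A^{m}$. Then for every $x\in[k^{n}]$ whose $n$-digit base-$k$ representation has $e$ as a prefix, the $m$-string of $x$ (with respect to $\pi$) is $e$. Moreover the domain of $p_{e}=\pi_{\varepsilon_{1}}\pi_{\varepsilon_{2}}\cdots\pi_{\varepsilon_{m}}$ is the interval of all $x\in[k^{n}]$ whose $n$-digit base-$k$ representation begins with $e$. In particular, for $x\in[k^{n}]$ identified with its $n$-digit base-$k$ representation, $\mathrm{dom}\,p_{x}=\{x\}$.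
   Context: $[N]=\{0<\cdots<N-1\}$. $G\subseteq A^{k}$ is the set of words of length $k$ containing each letter of $A$ exactly once, and $\Gamma_{k,n}=G^{k^{n-1}}$. Standard permutation of $w\in A^{N}$: let $f(w)$ be the letters of $w$ in nondecreasing order; for each letter $a$, $\pi_{a}$ is the unique order-preserving injective partial map on $[N]$ with domain the positions (from $0$) of $a$ in $f(w)$ and range the positions of $a$ in $w$; $\pi(w)=\bigcup_{a}\pi_{a}$. Maps compose left to right. For $x\in[k^{n}]$ and $m\ge0$ there is a unique sequence $\varepsilon_{1},\dots,\varepsilon_{m}\in A$ such that $x\cdot\pi_{\varepsilon_{1}}\cdots\pi_{\varepsilon_{m}}$ is defined; the word $\varepsilon_{1}\cdots\varepsilon_{m}$ is called the $m$-string of $x$. *)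

(* Letters of A = {0 < ... < k-1} are the naturals < k. *)
From mathcomp Require Import all_boot.
Set Implicit Arguments. Unset Strict Implicit. Unset Printing Implicit Defensive.

Definition inG (k : nat) (w : seq nat) : Prop :=
  size w = k /\ forall a, a < k -> count_mem a w = 1.

Definition inGamma (k n : nat) (v : seq nat) : Prop :=
  exists ws : seq (seq nat),
    [/\ size ws = k ^ n.-1, forall w, w \in ws -> inG k w & v = flatten ws].

Definition positions (a : nat) (s : seq nat) : seq nat :=
  [seq i <- iota 0 (size s) | nth 0 s i == a].

Definition fsort (w : seq nat) : seq nat := sort leq w.

(* pi_a as a partial map on [N]: the unique order-preserving injection from
   positions of a in f(w) onto positions of a in w *)
Definition pi_a (w : seq nat) (a : nat) (x : nat) : option nat :=
  if x \in positions a (fsort w)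
  then Some (nth 0 (positions a w) (index x (positions a (fsort w))))
  else None.

(* x . pi_{e_1} pi_{e_2} ... pi_{e_m}  (maps compose left to right) *)
Definition comp_path (w : seq nat) (e : seq nat) (x : nat) : option nat :=
  foldl (fun ox a => obind (pi_a w a) ox) (Some x) e.

Definition comp_def (w : seq nat) (e : seq nat) (x : nat) : Prop :=
  comp_path w e x <> None.

Definition is_mstring (k : nat) (w : seq nat) (m x : nat) (e : seq nat) : Prop :=
  [/\ size e = m, all (fun a => a < k) e, comp_def w e x &
      forall e', size e' = m -> all (fun a => a < k) e' -> comp_def w e' x -> e' = e].

Definition digits (k n x : nat) : seq nat :=
  [seq (x %/ k ^ (n.-1 - i)) %% k | i <- iota 0 n].

From mathcomp Require Import all_boot zify.

Set Implicit Arguments.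
Unset Strict Implicit.
Unset Printing Implicit Defensive.

(** Write K := k^(n-1), so that v is a concatenation of K permutations of
    [0, k), and f(v) = 0^K 1^K ... (k-1)^K.  Hence pi_a is defined exactly on
    the block [aK, aK + K), i.e. on the x whose leading base-k digit is a, and
    it sends the j-th position of that block into the j-th word of v, i.e. to
    some y with y / k = x mod K.  In digits: pi_a deletes the leading digit a
    of x and appends some digit at the end.  Iterating m <= n times, x . p_e
    is defined iff the first m digits of x spell e. *)

Lemma inG_perm_iota k w : inG k w -> perm_eq w (iota 0 k).
Proof.
case=> size_w count_w.
have iota_sub_w : {subset iota 0 k <= w}.
  move=> a; rewrite mem_iota add0n => /andP[_ a_lt_k].
  by rewrite -has_pred1 has_count count_w.
have size_w_le : size w <= size (iota 0 k) by rewrite size_w size_iota.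
have [_ eq_iota_w] := uniq_min_size (iota_uniq 0 k) iota_sub_w size_w_le.
apply: uniq_perm; last by move=> a; rewrite eq_iota_w.
- by rewrite (uniq_size_uniq (iota_uniq 0 k) eq_iota_w) size_w size_iota.
- exact: iota_uniq.
Qed.

Lemma count_mem_inG k w a : inG k w -> count_mem a w = (a < k).
Proof.
by move/inG_perm_iota/permP->; rewrite count_uniq_mem ?iota_uniq // mem_iota add0n.
Qed.

Lemma count_mem_flatten_inG k ws a : (forall w, w \in ws -> inG k w) ->
  count_mem a (flatten ws) = size ws * (a < k).
Proof.
elim: ws => //= w ws IH ws_G.
rewrite count_cat (count_mem_inG a (ws_G w (mem_head w ws))) IH // => u u_ws.
by apply: ws_G; rewrite inE u_ws orbT.
Qed.

Lemma mem_positions a s i : (i \in positions a s) = (i < size s) && (nth 0 s i == a).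
Proof. by rewrite mem_filter mem_iota add0n andbC. Qed.

Lemma size_positions a s : size (positions a s) = count_mem a s.
Proof.
by rewrite size_filter -[in RHS](mkseq_nth 0 s) /mkseq count_map.
Qed.

Lemma positions_cat a s1 s2 :
  positions a (s1 ++ s2) = positions a s1 ++ map (addn (size s1)) (positions a s2).
Proof.
rewrite /positions size_cat iotaD filter_cat add0n; congr (_ ++ _).
  by apply: eq_in_filter => i; rewrite mem_iota add0n => /andP[_ i_lt]; rewrite nth_cat i_lt.
rewrite -{1}(addn0 (size s1)) iotaDl filter_map; congr map.
by apply: eq_in_filter => i _ /=; rewrite nth_cat ltnNge leq_addr /= addKn.
Qed.

Definition repeat_letters K k := [seq i %/ K | i <- iota 0 (K * k)].

Section RepeatLetters.

Variables K k : nat.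

Lemma sorted_repeat_letters : sorted leq (repeat_letters K k).
Proof.
rewrite sorted_map.
by apply: sub_sorted (iota_ltn_sorted 0 _) => i j /ltnW; apply: leq_div2r.
Qed.

Lemma mem_positions_repeat_letters a i :
  (i \in positions a (repeat_letters K k)) = (i < K * k) && (i %/ K == a).
Proof.
rewrite mem_positions size_map size_iota.
by case: ltnP => //= i_lt; rewrite (nth_map 0) ?size_iota // nth_iota.
Qed.

Hypothesis K_gt0 : 0 < K.

Lemma divn_eq_mem_iota i a : (i %/ K == a) = (i \in iota (K * a) K).
Proof.
rewrite mem_iota eqn_leq leq_divRL // -ltnS ltn_divLR // mulSn.
by rewrite [K * a]mulnC andbC addnC.
Qed.

Lemma positions_repeat_letters a : a < k -> positions a (repeat_letters K k) = iota (K * a) K.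
Proof.
move=> a_lt_k; apply: (irr_sorted_eq ltn_trans ltnn).
- exact: (sorted_filter ltn_trans _ (iota_ltn_sorted 0 _)).
- exact: iota_ltn_sorted.
move=> i; rewrite mem_positions_repeat_letters divn_eq_mem_iota.
case i_in: (i \in iota _ _); rewrite ?andbF // andbT.
move: i_in; rewrite mem_iota => /andP[_ i_lt].
by apply: leq_trans i_lt _; rewrite addnC -mulnS leq_mul2l a_lt_k orbT.
Qed.

Lemma count_mem_repeat_letters a : count_mem a (repeat_letters K k) = K * (a < k).
Proof.
case: ltnP => [a_lt_k | k_le_a].
  by rewrite -size_positions positions_repeat_letters // size_iota muln1.
rewrite muln0; apply/count_memPn/mapP => -[i]; rewrite mem_iota add0n => /andP[_ i_lt] a_eq.
by move: k_le_a; rewrite a_eq leqNgt ltn_divLR // mulnC i_lt.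
Qed.

End RepeatLetters.

Lemma fsort_flatten_inG K k ws : 0 < K -> size ws = K -> (forall w, w \in ws -> inG k w) ->
  fsort (flatten ws) = repeat_letters K k.
Proof.
move=> K_gt0 size_ws ws_G; rewrite /fsort.
apply: (sorted_eq leq_trans anti_leq (sort_sorted leq_total _) (sorted_repeat_letters K k)).
rewrite perm_sort; apply/allP => a _ /=.
by rewrite (count_mem_flatten_inG _ ws_G) count_mem_repeat_letters // size_ws.
Qed.

Lemma nth_positions_lt a s j : j < size (positions a s) -> nth 0 (positions a s) j < size s.
Proof. by move=> j_lt; have := mem_nth 0 j_lt; rewrite mem_positions => /andP[]. Qed.

Lemma nth_positions_flatten_inG k ws a j : a < k -> (forall w, w \in ws -> inG k w) ->
  j < size ws -> nth 0 (positions a (flatten ws)) j %/ k = j.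
Proof.
move=> a_lt_k; elim: ws j => [|w ws IH] j //= ws_G j_lt.
have [w_G ws_G'] : inG k w /\ forall u, u \in ws -> inG k u.
  by split=> [|u u_ws]; apply: ws_G; rewrite inE ?eqxx ?u_ws ?orbT.
have size_pos_w : size (positions a w) = 1 by rewrite size_positions (count_mem_inG _ w_G) a_lt_k.
have [size_w _] := w_G.
rewrite positions_cat nth_cat size_pos_w size_w.
case: j j_lt => [|j] j_lt /=.
  by apply: divn_small; rewrite -size_w nth_positions_lt ?size_pos_w.
rewrite subn1 (nth_map 0); last by rewrite size_positions (count_mem_flatten_inG _ ws_G') a_lt_k muln1.
by rewrite -{1}(mul1n k) divnMDl ?IH // (leq_ltn_trans _ a_lt_k).
Qed.

Section PiFlatten.

Variables (k K : nat) (ws : seq (seq nat)).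
Hypotheses (K_gt0 : 0 < K) (size_ws : size ws = K) (ws_G : forall w, w \in ws -> inG k w).

Variant pi_a_flatten_spec (a x : nat) : option nat -> Prop :=
  | PiAFlattenSome y of x < K * k & x %/ K = a & y %/ k = x %% K :
      pi_a_flatten_spec a x (Some y)
  | PiAFlattenNone of ~~ ((x < K * k) && (x %/ K == a)) : pi_a_flatten_spec a x None.

Lemma pi_a_flattenP a x : pi_a_flatten_spec a x (pi_a (flatten ws) a x).
Proof.
rewrite /pi_a (fsort_flatten_inG K_gt0 size_ws ws_G) mem_positions_repeat_letters.
case: ifPn => [/andP[x_lt /eqP x_a] | not_head]; last exact: PiAFlattenNone.
have a_lt_k : a < k by rewrite -x_a ltn_divLR // mulnC.
apply: PiAFlattenSome => //.
have x_mod_lt : x %% K < K by apply: ltn_pmod.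
have x_eq : x = K * a + x %% K by rewrite {1}(divn_eq x K) x_a mulnC.
rewrite positions_repeat_letters // {1}x_eq -(nth_iota 0 (K * a) x_mod_lt).
by rewrite index_uniq ?size_iota ?iota_uniq // nth_positions_flatten_inG // size_ws.
Qed.

End PiFlatten.

Lemma comp_def_nil w x : comp_def w [::] x.
Proof. by []. Qed.

Lemma comp_def_cons w a e x :
  comp_def w (a :: e) x <-> if pi_a w a x is Some y then comp_def w e y else False.
Proof.
rewrite /comp_def /comp_path /=; case: (pi_a w a x) => [y|] //.
by split=> // none_def; apply: none_def; elim: e.
Qed.

Section Digits.

Variable k : nat.

Lemma size_digits n x : size (digits k n x) = n.
Proof. by rewrite size_map size_iota. Qed.

Lemma digitsS n x : digits k n.+1 x = x %/ k ^ n %% k :: digits k n x.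
Proof.
rewrite /digits /= subn0 -[1]/(1 + 0) iotaDl -map_comp; congr (_ :: _).
by apply/eq_in_map => i; rewrite mem_iota => /andP[_ i_lt] /=; congr (_ %/ k ^ _ %% k); lia.
Qed.

Lemma digitsSr n x : digits k n.+1 x = digits k n (x %/ k) ++ [:: x %% k].
Proof.
rewrite /digits -addn1 iotaD map_cat /= add0n addn1 /= subnn expn0 divn1; congr (_ ++ _).
apply/eq_in_map => i; rewrite mem_iota add0n => /andP[_ i_lt] /=.
have -> : n - i = (n.-1 - i).+1 by lia.
by rewrite expnS divnMA.
Qed.

Lemma digits_mod n x : digits k n (x %% k ^ n) = digits k n x.
Proof.
elim: n x => [|n IH] x //.
rewrite !digitsS -(IH (x %% k ^ n.+1)) -(IH x) modn_dvdm ?dvdn_exp2l //.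
by rewrite expnS -modn_divl modn_mod.
Qed.

Hypothesis k_gt0 : 0 < k.

Lemma digits_lead n x : x < k ^ n.+1 -> digits k n.+1 x = x %/ k ^ n :: digits k n (x %% k ^ n).
Proof.
by move=> x_lt; rewrite digitsS digits_mod modn_small // ltn_divLR ?expn_gt0 ?k_gt0 // -expnS.
Qed.

Lemma digits_inj n x y : x < k ^ n -> y < k ^ n -> digits k n x = digits k n y -> x = y.
Proof.
elim: n x y => [|n IH] x y.
  by rewrite expn0 !ltnS !leqn0 => /eqP -> /eqP ->.
move=> x_lt y_lt; rewrite !digits_lead // => -[lead_eq /IH tail_eq].
have k_n_gt0 : 0 < k ^ n by rewrite expn_gt0 k_gt0.
by rewrite (divn_eq x (k ^ n)) (divn_eq y (k ^ n)) lead_eq tail_eq ?ltn_pmod.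
Qed.

Lemma prefix_digits_lead n m x a e :
  x < k ^ n.+1 /\ take m.+1 (digits k n.+1 x) = a :: e <->
  [/\ x < k ^ n.+1, x %/ k ^ n = a & take m (digits k n (x %% k ^ n)) = e].
Proof.
split=> [[x_lt] | [x_lt <- <-]]; rewrite digits_lead //.
by case=> <- <-.
Qed.

End Digits.

Section Strings.

Variables (k n : nat) (ws : seq (seq nat)).
Hypotheses (k_gt0 : 0 < k) (size_ws : size ws = k ^ n) (ws_G : forall w, w \in ws -> inG k w).

Local Notation v := (flatten ws).

Lemma comp_def_cons_flatten a e x : size e <= n ->
  comp_def v (a :: e) x <-> x < k ^ n.+1 /\ take (size e).+1 (digits k n.+1 x) = a :: e.
Proof.
have k_n_gt0 : 0 < k ^ n by rewrite expn_gt0 k_gt0.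
elim: e a x => [|b e IH] a x size_e; rewrite comp_def_cons prefix_digits_lead // expnSr.
all: case: (pi_a_flattenP k_n_gt0 size_ws ws_G a x) => [y x_lt <- y_div | not_lead] /=;
  last by split=> // -[x_lt x_a]; rewrite x_lt x_a eqxx in not_lead.
- by rewrite take0; split=> _; [split | apply: comp_def_nil].
- have y_lt : y < k ^ n.+1 by rewrite expnSr -ltn_divLR // y_div ltn_pmod.
  rewrite IH ?(ltnW size_e) // digitsSr y_div takel_cat ?size_digits //.
  by split=> [[_ ->] | [_ _ ->]].
Qed.

Lemma comp_def_flatten e x : 0 < size e <= n.+1 ->
  comp_def v e x <-> x < k ^ n.+1 /\ take (size e) (digits k n.+1 x) = e.
Proof. by case: e => [|a e] // size_e; apply: comp_def_cons_flatten. Qed.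

End Strings.

Theorem lemma3p7 (k n : nat) (v : seq nat) :
  2 <= k -> 1 <= n -> inGamma k n v ->
  (forall (m : nat) (e : seq nat),
      1 <= m <= n -> size e = m -> all (fun a => a < k) e ->
      (forall x, x < k ^ n -> take m (digits k n x) = e -> is_mstring k v m x e) /\
      (forall x, comp_def v e x <-> (x < k ^ n /\ take m (digits k n x) = e))) /\
  (forall x, x < k ^ n -> forall y, comp_def v (digits k n x) y <-> y = x).
Proof.
move=> k_ge2 n_gt0 [ws [size_ws ws_G ->]].
have k_gt0 : 0 < k by apply: leq_trans k_ge2.
case: n n_gt0 size_ws => [|n] // _ /= size_ws.
have prefixP := comp_def_flatten k_gt0 size_ws ws_G.
split=> [m e /andP[m_gt0 m_le] size_e e_lt_k | x x_lt y].
  have e_ok : 0 < size e <= n.+1 by rewrite size_e m_gt0.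
  split=> [x x_lt prefix_x | x]; last by rewrite -size_e; apply: prefixP.
  split=> //; first by apply/(prefixP _ _ e_ok); rewrite size_e.
  move=> e' size_e' _ /(prefixP _ _ (_ : 0 < size e' <= n.+1)) [|_ prefix_e'].
    by rewrite size_e' m_gt0.
  by rewrite -prefix_e' size_e' prefix_x.
rewrite prefixP ?size_digits ?leqnn // take_oversize ?size_digits //.
by split=> [[y_lt /digits_inj ->] | ->].
Qed.
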